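(* Let $\alpha\in(0,1]$, $\lambda_0>0$, $m\in\mathbb N_0$, and for $\lambda\in(0,1)$ let $\mathcal E^{(m)}_\alpha(\lambda,n)$ denote the $n$-th Taylor coefficient at $u=0$ of $\big[1+\lambda(1-u)^{-\alpha}\big]^{-m}$, i.e. $\mathcal E^{(m)}_\alpha(\lambda,n)=\frac1{n!}\sum_{s\ge0}\frac{(-\lambda)^s(m)_s}{s!}(\alpha s)_n$. Then for every $x>0$, with $h=x/n$, $$\lim_{n\to\infty}\frac1h\,\mathcal E^{(m)}_\alpha(\lambda_0h^\alpha,n)=\sum_{s=1}^\infty\frac{(m)_s(-\lambda_0)^sx^{\alpha s-1}}{s!\,\Gamma(\alpha s)}=\frac{d}{dx}E^m_{\alpha,1}(-\lambda_0x^\alpha).$$ Together with the atom at the origin (for the discrete $\delta$ at $n=0$), the limit is the Prabhakar kernel $e^m_{\alpha,0}(-\lambda_0,x)=\delta(x)+\sum_{s\ge1}\frac{(m)_s(-\lambda_0)^sx^{\alpha s-1}}{s!\Gamma(\alpha s)}=D_x[\Theta(x)E^m_{\alpha,1}(-\lambda_0x^\alpha)]$, whose Laplace transform is $(1+\lambda_0s^{-\alpha})^{-m}$.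
   Context: $(c)_s=\Gamma(c+s)/\Gamma(c)$ is the Pochhammer symbol, $(c)_0=1$, $(0)_s=\delta_{s0}$. $E^\gamma_{\alpha,\beta}(z)=\sum_{s\ge0}\frac{(\gamma)_s}{s!}\frac{z^s}{\Gamma(\alpha s+\beta)}$ is the Prabhakar function. $\Theta$ is the Heaviside function with $\Theta(0)=1$, $D_x$ the (distributional) derivative, $\delta$ the Dirac distribution concentrated at $0^+$. *)

From Stdlib Require Import Reals Factorial.
From Coquelicot Require Import Coquelicot.
Open Scope R_scope.

(* Euler Gamma function, for z > 0 : Gamma z = int_0^oo t^(z-1) e^(-t) dt
   (improper Riemann integral). Only used at positive arguments. *)
Definition Gamma (z : R) : R :=
  RInt_gen (fun t => Rpower t (z - 1) * exp (- t))
           (at_right 0) (Rbar_locally p_infty).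

(* Pochhammer symbol (c)_n = Gamma(c+n)/Gamma(c) = c (c+1) ... (c+n-1);
   (c)_0 = 1 and (0)_n = delta_{n0}. *)
Fixpoint poch (c : R) (n : nat) : R :=
  match n with
  | O => 1
  | S k => poch c k * (c + INR k)
  end.

Definition prabhakar (gam alpha beta z : R) : R :=
  Series (fun s => poch gam s / INR (Factorial.fact s) * z ^ s / Gamma (alpha * INR s + beta)).

Definition Ecoef (m : nat) (alpha lambda : R) (n : nat) : R :=
  / INR (Factorial.fact n) *
  Series (fun s => (- lambda) ^ s * poch (INR m) s / INR (Factorial.fact s) * poch (alpha * INR s) n).

From Stdlib Require Import Reals Factorial Lra Lia ZArith Classical.
From Coquelicot Require Import Coquelicot.
Open Scope R_scope.

(* With [h = x/n], the [s]-th term of [(1/h) E^(m)_alpha(lambda0 h^alpha, n)] is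
     [(m)_s / s! * (-lambda0)^s * x^(alpha s - 1) * n^(1 - alpha s) (alpha s)_n / n!],
   and Gauss's formula [n^(1-a) (a)_n / n! -> 1 / Gamma a] turns it into the [s]-th term
   [(m)_s (-lambda0)^s x^(alpha s - 1) / (s! Gamma (alpha s))] of the kernel (the [s = 0]
   term vanishes for [n >= 1]).  The series converge to the series of the limits by
   Tannery's theorem; the domination comes from [n^(1-a) (a)_n / n! <= N^(1-a) e^(2a)] for
   [n >= N] and [1 <= N <= a], which beats any geometric rate in [s] once [N] is large.
   Passing to the limit, the same bound gives [1 / Gamma a <= N^(1-a) e^(2a)], so
   [E^m_{alpha,1}] is entire and may be differentiated termwise; the derivative of
   [E^m_{alpha,1}(-lambda0 x^alpha)] is again the kernel series. *)

Lemma Rpower_gt0 x y : 0 < Rpower x y.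
Proof. apply exp_pos. Qed.

Lemma Rpower_1_base z : Rpower 1 z = 1.
Proof. unfold Rpower. rewrite ln_1, Rmult_0_r, exp_0. reflexivity. Qed.

Lemma Rpower_pred_mult y r : 0 < y -> Rpower y (r - 1) * y = Rpower y r.
Proof. intros Hy. unfold Rminus. rewrite Rpower_plus, Rpower_Ropp, Rpower_1 by auto. field. lra. Qed.

Lemma Rpower_div x y c : 0 < x -> 0 < y -> Rpower (x / y) c = Rpower x c / Rpower y c.
Proof.
  intros Hx Hy. unfold Rpower, Rdiv. rewrite ln_mult, ln_Rinv by (auto; apply Rinv_0_lt_compat; auto).
  rewrite Rmult_plus_distr_l, exp_plus, <- exp_Ropp. f_equal. f_equal. ring.
Qed.

Lemma Rpower_mult_nat x c s : 0 < x -> Rpower x (c * INR s) = Rpower x c ^ s.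
Proof. intros Hx. rewrite <- Rpower_mult. apply Rpower_pow, Rpower_gt0. Qed.

Lemma exp_mult_nat c s : exp (c * INR s) = exp c ^ s.
Proof.
  induction s as [|s IH]; simpl. rewrite Rmult_0_r, exp_0; reflexivity.
  rewrite <- IH, <- exp_plus. f_equal. destruct s; simpl; ring.
Qed.

Lemma exp_nonpos_le_1 x : x <= 0 -> exp x <= 1.
Proof. intros H. rewrite <- exp_0. destruct H; [apply Rlt_le, exp_increasing; auto | subst; lra]. Qed.

Lemma ln_ge_1_minus_inv y : 0 < y -> 1 - / y <= ln y.
Proof.
  intros Hy. pose proof (exp_ineq1_le (- ln y)) as H.
  rewrite exp_Ropp, exp_ln in H; auto. lra.
Qed.

Lemma Rpower_bernoulli u p : 0 < u -> 0 <= p <= 1 -> Rpower u p <= 1 + p * (u - 1).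
Proof.
  intros Hu Hp. unfold Rpower. set (L := ln u). set (E := exp (p * L)).
  assert (H1 : u = E * exp ((1 - p) * L)).
  { unfold E. rewrite <- exp_plus. replace (p * L + (1 - p) * L) with L by ring.
    unfold L; rewrite exp_ln; auto. }
  assert (H2 : 1 = E * exp (- (p * L))).
  { unfold E. rewrite <- exp_plus. replace (p * L + - (p * L)) with 0 by ring. symmetry; apply exp_0. }
  assert (HE : 0 < E) by apply exp_pos.
  pose proof (exp_ineq1_le ((1 - p) * L)) as Ha.
  pose proof (exp_ineq1_le (- (p * L))) as Hb.
  assert (u >= E * (1 + (1 - p) * L)) by (rewrite H1; apply Rle_ge, Rmult_le_compat_l; lra).
  assert (1 >= E * (1 + - (p * L))) by (rewrite H2 at 1; apply Rle_ge, Rmult_le_compat_l; lra).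
  fold E. nra.
Qed.

Lemma Rpower_below_tangent t c p : 0 < t -> 0 < c -> 0 <= p <= 1 ->
  Rpower t p <= (1 - p) * Rpower c p + p * Rpower c (p - 1) * t.
Proof.
  intros Ht Hc Hp.
  assert (Hq : 0 < t / c) by (apply Rdiv_lt_0_compat; auto).
  replace (Rpower t p) with (Rpower c p * Rpower (t / c) p)
    by (rewrite Rpower_mult_distr by auto; f_equal; field; lra).
  rewrite <- (Rpower_pred_mult c p Hc).
  pose proof (Rpower_bernoulli (t / c) p Hq Hp).
  pose proof (Rpower_gt0 c (p - 1)).
  apply Rle_trans with (Rpower c (p - 1) * c * (1 + p * (t / c - 1))).
  - apply Rmult_le_compat_l; nra.
  - right. field. lra.
Qed.

Lemma pow_div_fact_le_exp y N : 0 <= y -> y ^ N / INR (fact N) <= exp y.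
Proof.
  intros Hy. eapply Rle_trans; [| apply (exp_ge_taylor y N Hy)].
  destruct N as [|N]. simpl. lra.
  rewrite tech5. assert (0 <= sum_f_R0 (fun k => y ^ k / INR (fact k)) N).
  { apply cond_pos_sum. intros k. apply Rmult_le_pos. apply pow_le; auto.
    apply Rlt_le, Rinv_0_lt_compat, INR_fact_lt_0. }
  lra.
Qed.

Lemma nat_upper_bound x : exists k : nat, x <= INR k.
Proof.
  destruct (archimed x) as [H1 H2].
  destruct (Z.lt_ge_cases (up x) 0) as [h|h].
  - exists 0%nat. simpl. apply IZR_lt in h. lra.
  - exists (Z.to_nat (up x)). rewrite INR_IZR_INZ, Z2Nat.id; lia || lra.
Qed.

Lemma pos_real_induction (P : R -> Prop) :
  (forall r, 0 < r <= 1 -> P r) -> (forall z, 0 < z -> P z -> P (z + 1)) ->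
  forall z, 0 < z -> P z.
Proof.
  intros Hbase Hstep z Hz. destruct (nat_upper_bound z) as [k Hk].
  revert z Hz Hk. induction k as [|k IH]; intros z Hz Hk.
  - simpl in Hk. lra.
  - destruct (Rle_dec z 1) as [h|h]; [apply Hbase; lra|].
    replace z with ((z - 1) + 1) by ring. apply Hstep; [lra|]. apply IH; [lra|].
    rewrite S_INR in Hk. lra.
Qed.

Lemma is_derive_Rpower x y : 0 < x -> is_derive (fun t => Rpower t y) x (y * Rpower x (y - 1)).
Proof. intros H. apply is_derive_Reals, derivable_pt_lim_power; auto. Qed.

Lemma continuous_Rpower x y : 0 < x -> continuous (fun t => Rpower t y) x.
Proof. intros H. apply (@ex_derive_continuous R_AbsRing R_NormedModule). eexists. apply is_derive_Rpower; auto. Qed.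

Lemma Rpower_lim_at_0 z : 0 < z -> filterlim (fun t => Rpower t z) (at_right 0) (locally 0).
Proof.
  intros Hz. unfold Rpower.
  apply (filterlim_comp _ _ _ ln (fun u => exp (z * u)) _ (Rbar_locally m_infty)).
  - apply is_lim_ln_0.
  - change (is_lim (fun u => exp (z * u)) m_infty 0).
    eapply is_lim_comp; [apply is_lim_exp_m | | exists 0; intros; discriminate].
    intros P [M HM]. exists (M / z). intros u Hu. apply HM.
    apply Rmult_lt_reg_l with (/ z). apply Rinv_0_lt_compat; auto.
    replace (/ z * (z * u)) with u by (field; lra). unfold Rdiv in Hu. lra.
Qed.

Lemma at_right_0_pos : at_right 0 (fun a => 0 < a).
Proof. exists (mkposreal 1 Rlt_0_1). intros y _ Hy. auto. Qed.

Lemma pinfty_pos : Rbar_locally p_infty (fun b => 0 < b).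
Proof. exists 0. auto. Qed.

Lemma ends_pos : filter_prod (at_right 0) (Rbar_locally p_infty) (fun ab => 0 < fst ab /\ 0 < snd ab).
Proof. apply Filter_prod with (fun a => 0 < a) (fun b => 0 < b); [apply at_right_0_pos | apply pinfty_pos | simpl; auto]. Qed.

Lemma ends_ordered : filter_prod (at_right 0) (Rbar_locally p_infty) (fun ab => 0 < fst ab < snd ab).
Proof.
  apply Filter_prod with (fun a => 0 < a < 1) (fun b => 1 < b).
  - exists (mkposreal 1 Rlt_0_1). intros y Hy Hy0. split; auto.
    unfold ball in Hy; simpl in Hy; unfold AbsRing_ball, abs, minus, plus, opp in Hy; simpl in Hy.
    rewrite Ropp_0, Rplus_0_r in Hy. apply Rabs_def2 in Hy. lra.
  - exists 1; auto.
  - simpl; intros; lra.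
Qed.

(* Monotone convergence for improper integrals: a continuous nonnegative function on (0,+oo)
   whose integrals over the compact subintervals are bounded is improperly integrable; its
   integral is the supremum of these partial integrals. *)
Lemma ex_RInt_gen_nonneg (f : R -> R) M :
  (forall t, 0 < t -> continuous f t) -> (forall t, 0 < t -> 0 <= f t) ->
  (forall a b, 0 < a -> a <= b -> RInt f a b <= M) ->
  ex_RInt_gen f (at_right 0) (Rbar_locally p_infty).
Proof.
  intros Hc Hp HM.
  assert (Hex : forall a b, 0 < a -> 0 < b -> ex_RInt f a b).
  { intros a b Ha Hb. apply (@ex_RInt_continuous R_CompleteNormedModule). intros z Hz. apply Hc.
    apply Rlt_le_trans with (Rmin a b); [apply Rmin_glb_lt; auto | tauto]. }
  assert (Hmono : forall a b a' b', 0 < a' <= a -> a <= b <= b' -> RInt f a b <= RInt f a' b').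
  { intros a b a' b' Ha Hb.
    rewrite <- (RInt_Chasles f a' a b') by (apply Hex; lra).
    rewrite <- (RInt_Chasles f a b b') by (apply Hex; lra).
    assert (0 <= RInt f a' a) by (apply RInt_ge_0; [lra | apply Hex; lra | intros; apply Hp; lra]).
    assert (0 <= RInt f b b') by (apply RInt_ge_0; [lra | apply Hex; lra | intros; apply Hp; lra]).
    change plus with Rplus. lra. }
  set (E := fun y => exists a b, 0 < a <= b /\ y = RInt f a b).
  assert (HB : bound E) by (exists M; intros y [a [b [Hab ->]]]; apply HM; lra).
  assert (HE : exists y, E y) by (exists (RInt f 1 1), 1, 1; split; [lra | auto]).
  destruct (completeness E HB HE) as [l [Hub Hlub]].
  exists l. intros P [eps Heps].
  assert (Hlow : exists a0 b0, 0 < a0 <= b0 /\ l - eps < RInt f a0 b0).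
  { apply NNPP. intros Hn.
    assert (l <= l - eps).
    { apply Hlub. intros y [a [b [Hab ->]]].
      destruct (Rle_dec (RInt f a b) (l - eps)) as [h|h]; auto.
      exfalso; apply Hn; exists a, b; split; auto; lra. }
    destruct eps; simpl in *; lra. }
  destruct Hlow as [a0 [b0 [Hab0 Hlt]]].
  apply Filter_prod with (Q := fun a => 0 < a < a0) (R := fun b => b0 < b).
  - assert (Ha0 : 0 < a0) by lra. exists (mkposreal a0 Ha0). intros y Hy Hy0.
    split; auto. unfold ball in Hy; simpl in Hy; unfold AbsRing_ball, abs, minus, plus, opp in Hy; simpl in Hy.
    rewrite Ropp_0, Rplus_0_r in Hy. apply Rabs_def2 in Hy. lra.
  - exists b0. auto.
  - intros a b Ha Hb. simpl. exists (RInt f a b). split.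
    + apply (RInt_correct f a b). apply Hex; lra.
    + apply Heps. assert (RInt f a b <= l) by (apply Hub; exists a, b; split; [lra | auto]).
      assert (RInt f a0 b0 <= RInt f a b) by (apply Hmono; lra).
      unfold ball; simpl; unfold AbsRing_ball, abs, minus, plus, opp; simpl.
      apply Rabs_def1; destruct eps; simpl in *; lra.
Qed.

Lemma is_RInt_gen_le (f g : R -> R) lf lg : (forall t, 0 < t -> 0 <= f t <= g t) ->
  is_RInt_gen f (at_right 0) (Rbar_locally p_infty) lf ->
  is_RInt_gen g (at_right 0) (Rbar_locally p_infty) lg -> lf <= lg.
Proof.
  intros H Hf Hg.
  eapply Rle_trans; [apply Rle_abs|].
  apply (@RInt_gen_norm R_CompleteNormedModule (at_right 0) (Rbar_locally p_infty)
     (at_right_proper_filter 0) (Rbar_locally_filter p_infty) f g lf lg); auto.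
  - apply filter_imp with (2 := ends_ordered). simpl; intros; lra.
  - apply filter_imp with (2 := ends_pos). intros [a b] [Ha Hb] x Hx; simpl in *.
    destruct (H x) as [H1 H2]; [lra|]. unfold norm; simpl; unfold abs; simpl.
    rewrite Rabs_pos_eq; auto.
Qed.

(** * The Gamma function *)

Definition gamma_integrand (z t : R) := Rpower t (z - 1) * exp (- t).

Lemma gamma_integrand_pos z t : 0 < gamma_integrand z t.
Proof. apply Rmult_lt_0_compat; [apply Rpower_gt0 | apply exp_pos]. Qed.

Lemma gamma_integrand_continuous z t : 0 < t -> continuous (gamma_integrand z) t.
Proof.
  intros H. apply (continuous_mult (fun t => Rpower t (z - 1)) (fun t => exp (- t))).
  - apply continuous_Rpower; auto.
  - apply (@ex_derive_continuous R_AbsRing R_NormedModule). auto_derive. auto.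
Qed.

Lemma ex_RInt_gamma_integrand z a b : 0 < a -> 0 < b -> ex_RInt (gamma_integrand z) a b.
Proof.
  intros Ha Hb. apply (@ex_RInt_continuous R_CompleteNormedModule). intros t Ht.
  apply gamma_integrand_continuous.
  apply Rlt_le_trans with (Rmin a b); [apply Rmin_glb_lt; auto | tauto].
Qed.

Lemma gamma_integrand_tail z : exists K, 0 < K /\ forall t, 1 <= t -> gamma_integrand z t <= K * exp (- t / 2).
Proof.
  destruct (nat_upper_bound (z - 1)) as [k Hk].
  set (K := 2 ^ k * INR (fact k)).
  assert (HK : 0 < K) by (apply Rmult_lt_0_compat; [apply pow_lt; lra | apply INR_fact_lt_0]).
  exists K. split; auto. intros t Ht. unfold gamma_integrand.
  assert (H1 : Rpower t (z - 1) <= t ^ k).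
  { rewrite <- Rpower_pow by lra. apply Rle_Rpower; lra. }
  assert (H2 : t ^ k <= K * exp (t / 2)).
  { pose proof (pow_div_fact_le_exp (t / 2) k ltac:(lra)) as H.
    pose proof (INR_fact_lt_0 k). pose proof (pow_lt 2 k ltac:(lra)).
    assert (Ht2 : t ^ k = 2 ^ k * (t / 2) ^ k)
      by (rewrite <- Rpow_mult_distr; f_equal; field).
    replace (t ^ k) with (2 ^ k * INR (fact k) * ((t / 2) ^ k / INR (fact k)))
      by (rewrite Ht2; field; lra).
    apply Rmult_le_compat_l; lra. }
  replace (exp (- t / 2)) with (exp (t / 2) * exp (- t)) by (rewrite <- exp_plus; f_equal; field).
  pose proof (exp_pos (- t)). pose proof (Rpower_gt0 t (z - 1)).
  apply Rle_trans with (t ^ k * exp (- t)); [apply Rmult_le_compat_r; lra|].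
  rewrite <- Rmult_assoc. apply Rmult_le_compat_r; lra.
Qed.

(* Near 0 the integrand is dominated by [t^(z-1)], whose integral over [(a,1)] is at most [1/z]. *)
Lemma RInt_gamma_integrand_near_0 z a : 0 < z -> 0 < a <= 1 -> RInt (gamma_integrand z) a 1 <= / z.
Proof.
  intros Hz Ha.
  assert (HD : forall x, Rmin a 1 <= x <= Rmax a 1 ->
            is_derive (fun t => Rpower t z / z) x (Rpower x (z - 1))).
  { intros x Hx. assert (Hx0 : 0 < x) by (eapply Rlt_le_trans; [|apply Hx]; apply Rmin_glb_lt; lra).
    pose proof (is_derive_scal _ x (/ z) _ (is_derive_Rpower x z Hx0)) as H.
    eapply is_derive_ext; [| replace (Rpower x (z - 1)) with (/ z * (z * Rpower x (z - 1))) by (field; lra); exact H].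
    intros t; simpl. unfold Rdiv; ring. }
  assert (HC : forall x, Rmin a 1 <= x <= Rmax a 1 -> continuous (fun t => Rpower t (z - 1)) x).
  { intros x Hx. apply continuous_Rpower. eapply Rlt_le_trans; [|apply Hx]; apply Rmin_glb_lt; lra. }
  assert (HI := is_RInt_derive (fun t => Rpower t z / z) (fun t => Rpower t (z - 1)) a 1 HD HC).
  apply Rle_trans with (RInt (fun t => Rpower t (z - 1)) a 1).
  - apply RInt_le; try lra; [apply ex_RInt_gamma_integrand; lra | eexists; exact HI |].
    intros x Hx. unfold gamma_integrand. pose proof (Rpower_gt0 x (z - 1)).
    assert (exp (- x) <= 1) by (apply exp_nonpos_le_1; lra). nra.
  - rewrite (is_RInt_unique _ _ _ _ HI), Rpower_1_base. unfold minus, plus, opp; simpl.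
    assert (0 < Rpower a z / z) by (apply Rdiv_lt_0_compat; [apply Rpower_gt0 | lra]). lra.
Qed.

Lemma RInt_gamma_integrand_tail z : exists M, forall b, 1 <= b -> RInt (gamma_integrand z) 1 b <= M.
Proof.
  destruct (gamma_integrand_tail z) as [K [HK Htail]].
  exists (2 * K). intros b Hb.
  assert (HD : forall x, Rmin 1 b <= x <= Rmax 1 b ->
            is_derive (fun t => - 2 * K * exp (- t / 2)) x (K * exp (- x / 2))).
  { intros x Hx. auto_derive; auto. unfold Rdiv; field. }
  assert (HC : forall x, Rmin 1 b <= x <= Rmax 1 b -> continuous (fun t => K * exp (- t / 2)) x).
  { intros x Hx. apply (@ex_derive_continuous R_AbsRing R_NormedModule). auto_derive; auto. }
  assert (HI := is_RInt_derive _ (fun t => K * exp (- t / 2)) 1 b HD HC).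
  apply Rle_trans with (RInt (fun t => K * exp (- t / 2)) 1 b).
  - apply RInt_le; try lra; [apply ex_RInt_gamma_integrand; lra | eexists; exact HI |].
    intros x Hx. apply Htail. lra.
  - rewrite (is_RInt_unique _ _ _ _ HI). unfold minus, plus, opp; simpl.
    pose proof (exp_pos (- b / 2)). assert (exp (- (1) / 2) <= 1) by (apply exp_nonpos_le_1; lra).
    nra.
Qed.

Lemma Gamma_correct z : 0 < z ->
  is_RInt_gen (gamma_integrand z) (at_right 0) (Rbar_locally p_infty) (Gamma z).
Proof.
  intros Hz. destruct (RInt_gamma_integrand_tail z) as [M HM].
  assert (Hbound : forall a b, 0 < a -> a <= b -> RInt (gamma_integrand z) a b <= / z + M).
  { intros a b Ha Hab.
    set (a' := Rmin a 1). set (b' := Rmax b 1).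
    assert (Ha' : 0 < a' <= 1) by (unfold a'; split; [apply Rmin_glb_lt; lra | apply Rmin_r]).
    assert (Hb' : 1 <= b') by apply Rmax_r.
    assert (Haa' : a' <= a) by apply Rmin_l. assert (Hbb' : b <= b') by apply Rmax_l.
    assert (Hex : forall u v, 0 < u -> 0 < v -> ex_RInt (gamma_integrand z) u v)
      by (intros; apply ex_RInt_gamma_integrand; lra).
    assert (Hnn : forall u v, 0 < u <= v -> 0 <= RInt (gamma_integrand z) u v)
      by (intros u v Huv; apply RInt_ge_0; [lra | apply Hex; lra | intros; apply Rlt_le, gamma_integrand_pos]).
    apply Rle_trans with (RInt (gamma_integrand z) a' b').
    - rewrite <- (RInt_Chasles (gamma_integrand z) a' a b') by (apply Hex; lra).
      rewrite <- (RInt_Chasles (gamma_integrand z) a b b') by (apply Hex; lra).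
      pose proof (Hnn a' a ltac:(lra)). pose proof (Hnn b b' ltac:(lra)).
      change plus with Rplus. lra.
    - rewrite <- (RInt_Chasles (gamma_integrand z) a' 1 b') by (apply Hex; lra).
      pose proof (RInt_gamma_integrand_near_0 z a' Hz Ha'). pose proof (HM b' Hb').
      change plus with Rplus. lra. }
  apply (@RInt_gen_correct R_CompleteNormedModule (at_right 0) (Rbar_locally p_infty)
     (Proper_StrongProper _ (at_right_proper_filter 0)) (Proper_StrongProper _ (Rbar_locally_filter p_infty))).
  apply (ex_RInt_gen_nonneg _ _ (gamma_integrand_continuous z) (fun t _ => Rlt_le _ _ (gamma_integrand_pos z t)) Hbound).
Qed.

Lemma Gamma_unique z l : is_RInt_gen (gamma_integrand z) (at_right 0) (Rbar_locally p_infty) l -> Gamma z = l.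
Proof.
  apply (@is_RInt_gen_unique R_CompleteNormedModule (at_right 0) (Rbar_locally p_infty)
     (Proper_StrongProper _ (at_right_proper_filter 0)) (Proper_StrongProper _ (Rbar_locally_filter p_infty))).
Qed.

Lemma gamma_integrand_lim_pinfty z : filterlim (gamma_integrand z) (Rbar_locally p_infty) (locally 0).
Proof.
  destruct (gamma_integrand_tail z) as [K [_ HK]].
  change (filterlim (gamma_integrand z) (Rbar_locally p_infty) (Rbar_locally (Finite 0))).
  apply (filterlim_le_le (fun _ => 0) _ (fun t => K * exp (- t / 2))).
  - exists 1. intros t Ht. split; [apply Rlt_le, gamma_integrand_pos | apply HK; lra].
  - apply filterlim_const.
  - replace (Finite 0) with (Rbar_mult K 0) by (simpl; f_equal; ring).
    apply (is_lim_scal_l (fun t => exp (- t / 2)) K p_infty 0).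
    eapply is_lim_comp; [apply is_lim_exp_m | | exists 0; intros; discriminate].
    intros P [M HM]. exists (-2 * M). intros x Hx. apply HM. lra.
Qed.

Lemma gamma_integrand_lim_0 z : 1 < z -> filterlim (gamma_integrand z) (at_right 0) (locally 0).
Proof.
  intros Hz. change (filterlim (gamma_integrand z) (at_right 0) (Rbar_locally (Finite 0))).
  apply (filterlim_le_le (fun _ => 0) _ (fun t => Rpower t (z - 1))).
  - apply filter_imp with (2 := at_right_0_pos). intros t Ht.
    split; [apply Rlt_le, gamma_integrand_pos|]. unfold gamma_integrand.
    pose proof (Rpower_gt0 t (z - 1)). assert (exp (- t) <= 1) by (apply exp_nonpos_le_1; lra). nra.
  - apply filterlim_const.
  - apply Rpower_lim_at_0. lra.
Qed.

Lemma is_derive_gamma_integrand z t : 0 < t ->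
  is_derive (fun u => - gamma_integrand (z + 1) u) t (gamma_integrand (z + 1) t - z * gamma_integrand z t).
Proof.
  intros Ht. unfold gamma_integrand. replace (z + 1 - 1) with z by ring.
  assert (Hexp : is_derive (fun t => exp (- t)) t (- exp (- t))) by (auto_derive; auto; ring).
  assert (H := is_derive_mult _ _ t _ _ (is_derive_Rpower t z Ht) Hexp (fun n m => Rmult_comm n m)).
  apply is_derive_opp in H.
  replace (Rpower t z * exp (- t) - z * (Rpower t (z - 1) * exp (- t)))
    with (opp (plus (mult (z * Rpower t (z - 1)) (exp (- t))) (mult (Rpower t z) (- exp (- t))))).
  - exact H.
  - unfold opp, plus, mult; simpl. ring.
Qed.

(* The boundary terms [-t^z e^(-t)] vanish at [0+] and [+oo], hence [Gamma (z+1) = z Gamma z]. *)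
Lemma Gamma_succ z : 0 < z -> Gamma (z + 1) = z * Gamma z.
Proof.
  intros Hz.
  set (F := fun t => - gamma_integrand (z + 1) t).
  set (f := fun t => gamma_integrand (z + 1) t - z * gamma_integrand z t).
  assert (HD : forall t, 0 < t -> is_derive F t (f t)) by (intros; apply is_derive_gamma_integrand; auto).
  assert (HDF : forall t, 0 < t -> Derive F t = f t) by (intros t Ht; apply is_derive_unique, HD; auto).
  assert (Hmin : forall a b x, 0 < a -> 0 < b -> Rmin a b <= x -> 0 < x)
    by (intros a b x Ha Hb Hx; apply Rlt_le_trans with (Rmin a b); [apply Rmin_glb_lt | ]; auto).
  assert (HI : is_RInt_gen (Derive F) (at_right 0) (Rbar_locally p_infty) (0 - 0)).
  { apply is_RInt_gen_Derive.
    - apply filter_imp with (2 := ends_pos). intros [a b] [Ha Hb] x Hx; simpl in *.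
      eexists; apply HD. apply (Hmin a b); auto; apply Hx.
    - apply filter_imp with (2 := ends_pos). intros [a b] [Ha Hb] x Hx; simpl in *.
      assert (Hx0 : 0 < x) by (apply (Hmin a b); auto; apply Hx).
      assert (HC : continuous f x).
      { apply (continuous_minus (gamma_integrand (z + 1)) (fun t => z * gamma_integrand z t)).
        - apply gamma_integrand_continuous; auto.
        - apply (continuous_scal_r z (gamma_integrand z)). apply gamma_integrand_continuous; auto. }
      unfold continuous. rewrite HDF by auto.
      eapply filterlim_ext_loc; [| exact HC].
      exists (mkposreal x Hx0). intros y Hy. simpl in Hy.
      unfold ball in Hy; simpl in Hy; unfold AbsRing_ball, abs, minus, plus, opp in Hy; simpl in Hy.
      apply Rabs_def2 in Hy. rewrite HDF; auto. lra.
    - unfold F. replace 0 with (opp 0) at 2 by (unfold opp; simpl; ring).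
      apply (filterlim_comp _ _ _ (gamma_integrand (z + 1)) opp _ (locally 0)).
      + apply gamma_integrand_lim_0; lra.
      + apply (@filterlim_opp R_AbsRing R_NormedModule).
    - unfold F. replace 0 with (opp 0) at 1 by (unfold opp; simpl; ring).
      apply (filterlim_comp _ _ _ (gamma_integrand (z + 1)) opp _ (locally 0)).
      + apply gamma_integrand_lim_pinfty.
      + apply (@filterlim_opp R_AbsRing R_NormedModule). }
  assert (HG := is_RInt_gen_plus _ _ _ _ HI (is_RInt_gen_scal _ z _ (Gamma_correct z Hz))).
  apply is_RInt_gen_ext with (g := gamma_integrand (z + 1)) in HG.
  - rewrite (Gamma_unique _ _ HG). unfold plus, scal; simpl; unfold mult; simpl. ring.
  - apply filter_imp with (2 := ends_pos). intros [a b] [Ha Hb] x Hx; simpl in *.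
    assert (Hx0 : 0 < x) by (apply (Hmin a b); auto; apply Rlt_le, Hx).
    rewrite HDF by auto. unfold f, plus, scal; simpl; unfold mult; simpl. ring.
Qed.

Lemma Gamma_1 : Gamma 1 = 1.
Proof.
  set (F := fun t => - exp (- t)).
  assert (Hg : forall t, gamma_integrand 1 t = exp (- t)).
  { intros t. unfold gamma_integrand, Rpower. replace (1 - 1) with 0 by ring. rewrite Rmult_0_l, exp_0. ring. }
  assert (HD : forall t, is_derive F t (exp (- t))) by (intros t; unfold F; auto_derive; auto; ring).
  assert (HI : is_RInt_gen (Derive F) (at_right 0) (Rbar_locally p_infty) (0 - (-1))).
  { apply is_RInt_gen_Derive.
    - apply filter_forall. intros ab x _. eexists; apply HD.
    - apply filter_forall. intros ab x _.
      apply (continuous_ext (fun t => exp (- t))). intros t; symmetry; apply is_derive_unique, HD.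
      apply (@ex_derive_continuous R_AbsRing R_NormedModule). auto_derive; auto.
    - apply (filterlim_filter_le_1 (F := locally 0)). apply filter_le_within.
      replace (-1) with (F 0) by (unfold F; rewrite Ropp_0, exp_0; auto).
      apply (@ex_derive_continuous R_AbsRing R_NormedModule). eexists; apply HD.
    - unfold F. replace 0 with (opp 0) at 1 by (unfold opp; simpl; ring).
      apply (filterlim_comp _ _ _ (fun t => exp (- t)) opp _ (locally 0)).
      + eapply filterlim_ext; [apply Hg | apply gamma_integrand_lim_pinfty].
      + apply (@filterlim_opp R_AbsRing R_NormedModule). }
  apply is_RInt_gen_ext with (g := gamma_integrand 1) in HI.
  - rewrite (Gamma_unique _ _ HI). change (Rminus 0 (-1) = 1); ring.
  - apply filter_forall. intros ab x _. rewrite Hg. apply is_derive_unique, HD.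
Qed.

(* Log-convexity of Gamma in the form [Gamma (c + p) <= c^p Gamma c] for [0 <= p <= 1]:
   integrate [t^p <= (1-p) c^p + p c^(p-1) t] against [t^(c-1) e^(-t)]. *)
Lemma Gamma_shift_le c p : 0 < c -> 0 <= p <= 1 -> Gamma (c + p) <= Rpower c p * Gamma c.
Proof.
  intros Hc Hp.
  set (c1 := (1 - p) * Rpower c p). set (c2 := p * Rpower c (p - 1)).
  assert (Hle : Gamma (c + p) <= plus (scal c1 (Gamma c)) (scal c2 (Gamma (c + 1)))).
  { apply (is_RInt_gen_le (gamma_integrand (c + p))
             (fun t => plus (scal c1 (gamma_integrand c t)) (scal c2 (gamma_integrand (c + 1) t)))).
    - intros t Ht. split; [apply Rlt_le, gamma_integrand_pos|].
      change (gamma_integrand (c + p) t <= c1 * gamma_integrand c t + c2 * gamma_integrand (c + 1) t).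
      unfold gamma_integrand.
      replace (c + p - 1) with ((c - 1) + p) by ring. replace (c + 1 - 1) with ((c - 1) + 1) by ring.
      rewrite (Rpower_plus (c - 1) p t), (Rpower_plus (c - 1) 1 t), Rpower_1 by auto.
      pose proof (Rpower_below_tangent t c p Ht Hc Hp).
      assert (HA : 0 < Rpower t (c - 1) * exp (- t))
        by (apply Rmult_lt_0_compat; [apply Rpower_gt0 | apply exp_pos]).
      apply Rle_trans with (Rpower t (c - 1) * exp (- t) * (c1 + c2 * t)).
      + rewrite (Rmult_comm (Rpower t (c - 1)) (Rpower t p)), Rmult_assoc, (Rmult_comm (Rpower t p)).
        apply Rmult_le_compat_l; unfold c1, c2; lra.
      + right. ring.
    - apply Gamma_correct; lra.
    - exact (is_RInt_gen_plus _ _ _ _ (is_RInt_gen_scal _ c1 _ (Gamma_correct c Hc))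
               (is_RInt_gen_scal _ c2 _ (Gamma_correct (c + 1) (Rplus_lt_0_compat _ _ Hc Rlt_0_1)))). }
  change (Gamma (c + p) <= c1 * Gamma c + c2 * Gamma (c + 1)) in Hle.
  rewrite Gamma_succ in Hle by auto.
  replace (Rpower c p * Gamma c) with (c1 * Gamma c + c2 * (c * Gamma c)); [lra|].
  unfold c1, c2. rewrite <- (Rpower_pred_mult c p Hc). ring.
Qed.

Lemma Gamma_pos z : 0 < z -> 0 < Gamma z.
Proof.
  revert z. apply (pos_real_induction (fun z => 0 < Gamma z)).
  - intros r Hr.
    assert (H2 : Gamma 2 = 1) by (replace 2 with (1 + 1) by ring; rewrite Gamma_succ, Gamma_1 by lra; ring).
    pose proof (Gamma_shift_le (r + 1) (1 - r) ltac:(lra) ltac:(lra)) as H.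
    replace (r + 1 + (1 - r)) with 2 in H by ring. rewrite H2, Gamma_succ in H by lra.
    assert (0 < Rpower (r + 1) (1 - r) * r) by (apply Rmult_lt_0_compat; [apply Rpower_gt0 | lra]).
    nra.
  - intros z Hz H. rewrite Gamma_succ by auto. nra.
Qed.

Lemma Gamma_nat n : Gamma (INR n + 1) = INR (fact n).
Proof.
  induction n as [|n IH]. simpl. replace (0 + 1) with 1 by ring. apply Gamma_1.
  rewrite S_INR, Gamma_succ, IH by (pose proof (pos_INR n); lra).
  rewrite fact_simpl, mult_INR, S_INR. ring.
Qed.

Lemma poch_pos a n : 0 < a -> 0 < poch a n.
Proof. intros Ha. induction n; simpl. lra. pose proof (pos_INR n). nra. Qed.

Lemma Gamma_poch a n : 0 < a -> Gamma (a + INR n) = poch a n * Gamma a.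
Proof.
  intros Ha. induction n as [|n IH]. simpl. rewrite Rplus_0_r. ring.
  rewrite S_INR. replace (a + (INR n + 1)) with ((a + INR n) + 1) by ring.
  rewrite Gamma_succ, IH by (pose proof (pos_INR n); lra). simpl. ring.
Qed.

(** * Gauss's limit formula [n^(1-a) (a)_n / n! -> 1 / Gamma a] *)

Definition gauss_seq (a : R) (n : nat) := Rpower (INR n) (1 - a) * poch a n / INR (fact n).

Lemma gauss_seq_nonneg a n : 0 < a -> 0 <= gauss_seq a n.
Proof.
  intros Ha. unfold gauss_seq. pose proof (poch_pos a n Ha). pose proof (Rpower_gt0 (INR n) (1 - a)).
  pose proof (INR_fact_lt_0 n). apply Rlt_le, Rdiv_lt_0_compat; auto. apply Rmult_lt_0_compat; auto.
Qed.

Lemma lim_inv_INR_S : is_lim_seq (fun n => / INR (S n)) 0.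
Proof.
  apply (is_lim_seq_incr_1 (fun n => / INR n)).
  replace (Finite 0) with (Rbar_inv p_infty) by auto.
  apply is_lim_seq_inv; [apply is_lim_seq_INR | discriminate].
Qed.

Lemma lim_INR_S_ratio r : 0 <= r -> is_lim_seq (fun n => INR (S n) / (INR (S n) + r)) 1.
Proof.
  intros Hr.
  assert (Hinv : is_lim_seq (fun n => / (INR (S n) + r)) 0).
  { apply is_lim_seq_le_le with (fun _ => 0) (fun n => / INR (S n));
      [| apply is_lim_seq_const | apply lim_inv_INR_S].
    intros n. pose proof (lt_0_INR (S n) ltac:(lia)). split.
    - apply Rlt_le, Rinv_0_lt_compat; lra.
    - apply Rinv_le_contravar; lra. }
  apply is_lim_seq_ext with (fun n => 1 - r * / (INR (S n) + r)).
  { intros n. pose proof (lt_0_INR (S n) ltac:(lia)). field. lra. }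
  replace (Finite 1) with (Finite (1 - r * 0)) by (f_equal; ring).
  apply is_lim_seq_minus'; [apply is_lim_seq_const | apply is_lim_seq_mult'; [apply is_lim_seq_const | exact Hinv]].
Qed.

Lemma gauss_seq_Gamma a n : 0 < a ->
  Gamma a * gauss_seq a (S n) = Rpower (INR (S n)) (1 - a) * Gamma (INR (S n) + a) / Gamma (INR (S n) + 1).
Proof.
  intros Ha. unfold gauss_seq. rewrite Gamma_nat, (Rplus_comm _ a), Gamma_poch by auto.
  field. apply INR_fact_neq_0.
Qed.

(* For [0 < r <= 1], log-convexity squeezes [Gamma r * gauss_seq r (n+1)] between
   [(y / (y + r))^(1-r)] and [1], where [y = n + 1]. *)
Lemma gauss_seq_squeeze r n : 0 < r <= 1 ->
  Rpower (INR (S n) / (INR (S n) + r)) (1 - r) <= Gamma r * gauss_seq r (S n) <= 1.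
Proof.
  intros Hr. set (y := INR (S n)). assert (Hy : 0 < y) by (apply lt_0_INR; lia).
  rewrite gauss_seq_Gamma by lra. fold y.
  assert (Hup := Gamma_shift_le y r Hy ltac:(lra)).
  assert (Hlow := Gamma_shift_le (y + r) (1 - r) ltac:(lra) ltac:(lra)).
  replace (y + r + (1 - r)) with (y + 1) in Hlow by ring.
  rewrite Gamma_succ in * by lra.
  pose proof (Gamma_pos y Hy). pose proof (Gamma_pos (y + r) ltac:(lra)).
  pose proof (Rpower_gt0 y (1 - r)). pose proof (Rpower_gt0 (y + r) (1 - r)).
  assert (Hyy : Rpower y (1 - r) * Rpower y r = y)
    by (rewrite <- Rpower_plus; replace (1 - r + r) with 1 by ring; apply Rpower_1; auto).
  rewrite Rpower_div by lra. split.
  - apply Rmult_le_reg_r with (Rpower (y + r) (1 - r) * (y * Gamma y)); [apply Rmult_lt_0_compat; nra|].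
    replace (Rpower y (1 - r) / Rpower (y + r) (1 - r) * (Rpower (y + r) (1 - r) * (y * Gamma y)))
      with (Rpower y (1 - r) * (y * Gamma y)) by (field; lra).
    replace (Rpower y (1 - r) * Gamma (y + r) / (y * Gamma y) * (Rpower (y + r) (1 - r) * (y * Gamma y)))
      with (Rpower y (1 - r) * (Rpower (y + r) (1 - r) * Gamma (y + r))) by (field; nra).
    apply Rmult_le_compat_l; lra.
  - apply Rmult_le_reg_r with (y * Gamma y); [nra|].
    replace (Rpower y (1 - r) * Gamma (y + r) / (y * Gamma y) * (y * Gamma y))
      with (Rpower y (1 - r) * Gamma (y + r)) by (field; nra).
    replace (1 * (y * Gamma y)) with (Rpower y (1 - r) * (Rpower y r * Gamma y))
      by (rewrite <- Rmult_assoc, Hyy; ring).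
    apply Rmult_le_compat_l; lra.
Qed.

Lemma gauss_seq_lim_base r : 0 < r <= 1 -> is_lim_seq (gauss_seq r) (/ Gamma r).
Proof.
  intros Hr. pose proof (Gamma_pos r ltac:(lra)) as HG.
  apply is_lim_seq_incr_1.
  apply is_lim_seq_ext with (fun n => / Gamma r * (Gamma r * gauss_seq r (S n))).
  { intros n; field; lra. }
  replace (Finite (/ Gamma r)) with (Rbar_mult (/ Gamma r) 1) by (simpl; f_equal; ring).
  apply is_lim_seq_scal_l.
  apply is_lim_seq_le_le with (fun n => Rpower (INR (S n) / (INR (S n) + r)) (1 - r)) (fun _ => 1).
  - intros n. apply gauss_seq_squeeze; auto.
  - replace (Finite 1) with (Finite (Rpower 1 (1 - r))) by (rewrite Rpower_1_base; reflexivity).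
    apply (is_lim_seq_continuous (fun u => Rpower u (1 - r))).
    + apply continuity_pt_filterlim, continuous_Rpower; lra.
    + apply lim_INR_S_ratio; lra.
  - apply is_lim_seq_const.
Qed.

(* [gauss_seq (a+1) n = gauss_seq a n * (1/n + 1/a)], which transfers the limit from [a] to [a+1]. *)
Lemma gauss_seq_lim_succ a : 0 < a -> is_lim_seq (gauss_seq a) (/ Gamma a) ->
  is_lim_seq (gauss_seq (a + 1)) (/ Gamma (a + 1)).
Proof.
  intros Ha Hl. pose proof (Gamma_pos a Ha).
  apply is_lim_seq_incr_1. apply is_lim_seq_incr_1 in Hl.
  apply is_lim_seq_ext with (fun n => gauss_seq a (S n) * (/ INR (S n) + / a)).
  { intros n. set (y := INR (S n)). assert (Hy : 0 < y) by (apply lt_0_INR; lia).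
    assert (Hpoch : forall k, poch (a + 1) k * a = poch a k * (a + INR k)).
    { induction k as [|k IH]; simpl; [ring|].
      replace (poch (a + 1) k * (a + 1 + INR k) * a) with (poch (a + 1) k * a * (a + 1 + INR k)) by ring.
      rewrite IH. destruct k; simpl; ring. }
    assert (Ep : poch (a + 1) (S n) = poch a (S n) * (a + y) / a)
      by (apply Rmult_eq_reg_r with a; [rewrite Hpoch; unfold y; field |]; lra).
    assert (Er : Rpower y (1 - (a + 1)) = Rpower y (1 - a) / y).
    { rewrite <- (Rpower_pred_mult y (1 - a) Hy). replace (1 - a - 1) with (1 - (a + 1)) by ring. field. lra. }
    unfold gauss_seq. fold y. rewrite Ep, Er. pose proof (INR_fact_lt_0 (S n)). field. repeat split; lra. }
  rewrite Gamma_succ by auto. replace (/ (a * Gamma a)) with (/ Gamma a * (0 + / a)) by (field; lra).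
  apply is_lim_seq_mult'; auto. apply is_lim_seq_plus'; [apply lim_inv_INR_S | apply is_lim_seq_const].
Qed.

Theorem gauss_seq_lim a : 0 < a -> is_lim_seq (gauss_seq a) (/ Gamma a).
Proof.
  revert a. apply (pos_real_induction (fun a => is_lim_seq (gauss_seq a) (/ Gamma a))).
  - apply gauss_seq_lim_base.
  - apply gauss_seq_lim_succ.
Qed.

(** * A bound on [1 / Gamma a] uniform enough for dominated convergence *)

(* [(a + x) / (x + 1) <= ((x + 1) / x)^(a - 1)] for [a >= 1], from [ln u >= 1 - 1/u] and [exp v >= 1 + v]. *)
Lemma shift_ratio_le_Rpower a x : 1 <= a -> 0 < x -> (a + x) / (x + 1) <= Rpower ((x + 1) / x) (a - 1).
Proof.
  intros Ha Hx. unfold Rpower. eapply Rle_trans; [| apply exp_ineq1_le].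
  pose proof (ln_ge_1_minus_inv ((x + 1) / x) ltac:(apply Rdiv_lt_0_compat; lra)) as H.
  replace (/ ((x + 1) / x)) with (x / (x + 1)) in H by (field; lra).
  apply Rle_trans with (1 + (a - 1) * (1 - x / (x + 1))).
  - right; field; lra.
  - apply Rplus_le_compat_l, Rmult_le_compat_l; lra.
Qed.

Lemma gauss_seq_decr a n : 1 <= a -> (1 <= n)%nat -> gauss_seq a (S n) <= gauss_seq a n.
Proof.
  intros Ha Hn. set (x := INR n). assert (Hx : 1 <= x) by (apply (le_INR 1); auto).
  set (Q := Rpower ((x + 1) / x) (a - 1)).
  assert (HQ := shift_ratio_le_Rpower a x Ha ltac:(lra)). fold Q in HQ.
  assert (HQp : 0 < Q) by apply Rpower_gt0.
  assert (E : Rpower (x + 1) (1 - a) = Rpower x (1 - a) / Q).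
  { unfold Q. replace (1 - a) with (- (a - 1)) by ring. rewrite !Rpower_Ropp, Rpower_div by lra.
    field. split; apply Rgt_not_eq, Rpower_gt0. }
  assert (Hstep : gauss_seq a (S n) = gauss_seq a n * ((a + x) / (x + 1) / Q)).
  { unfold gauss_seq. rewrite S_INR, fact_simpl, mult_INR, S_INR. fold x. rewrite E. simpl poch. fold x.
    pose proof (INR_fact_lt_0 n). field. repeat split; lra. }
  rewrite Hstep. rewrite <- (Rmult_1_r (gauss_seq a n)) at 2.
  apply Rmult_le_compat_l; [apply gauss_seq_nonneg; lra|].
  apply Rle_trans with (Q / Q); [| right; field; lra].
  unfold Rdiv; apply Rmult_le_compat_r; [apply Rlt_le, Rinv_0_lt_compat|]; auto.
Qed.

Lemma poch_le_pow a k : 0 < a -> INR k <= a -> poch a k <= (2 * a) ^ k.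
Proof.
  intros Ha. induction k as [|k IH]; intros Hk; simpl; [lra|].
  rewrite S_INR in Hk. pose proof (pos_INR k). pose proof (poch_pos a k Ha).
  rewrite (Rmult_comm (2 * a)). specialize (IH ltac:(lra)). apply Rmult_le_compat; lra.
Qed.

Lemma gauss_seq_tail_bound a N n : (1 <= N)%nat -> INR N <= a -> (N <= n)%nat ->
  gauss_seq a n <= Rpower (INR N) (1 - a) * exp (2 * a).
Proof.
  intros HN Ha Hn. assert (Ha1 : 1 <= a) by (pose proof (le_INR 1 N HN); simpl in *; lra).
  induction Hn as [|n Hn IH].
  - unfold gauss_seq. pose proof (poch_le_pow a N ltac:(lra) Ha).
    pose proof (pow_div_fact_le_exp (2 * a) N ltac:(lra)).
    pose proof (Rpower_gt0 (INR N) (1 - a)). pose proof (INR_fact_lt_0 N).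
    unfold Rdiv. rewrite Rmult_assoc. apply Rmult_le_compat_l; [lra|].
    apply Rle_trans with ((2 * a) ^ N * / INR (fact N)); [|exact H0].
    apply Rmult_le_compat_r; [apply Rlt_le, Rinv_0_lt_compat|]; lra.
  - eapply Rle_trans; [apply gauss_seq_decr|]; auto. lia.
Qed.

(* Letting [n -> +oo] in the previous bound. *)
Lemma inv_Gamma_bound a N : (1 <= N)%nat -> INR N <= a -> / Gamma a <= Rpower (INR N) (1 - a) * exp (2 * a).
Proof.
  intros HN Ha. assert (Ha0 : 0 < a) by (pose proof (le_INR 1 N HN); simpl in *; lra).
  change (Rbar_le (/ Gamma a) (Rpower (INR N) (1 - a) * exp (2 * a))).
  apply (is_lim_seq_le_loc (gauss_seq a) (fun _ => Rpower (INR N) (1 - a) * exp (2 * a))).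
  - exists N. intros n Hn. apply gauss_seq_tail_bound; auto.
  - apply gauss_seq_lim; auto.
  - apply is_lim_seq_const.
Qed.

(** * Tannery's theorem: dominated convergence for series *)

Lemma ex_series_eventually_dominated (a M : nat -> R) S0 :
  (forall s, (S0 <= s)%nat -> Rabs (a s) <= M s) -> ex_series M -> ex_series a.
Proof.
  intros H HM. apply (ex_series_incr_n a S0).
  apply (ex_series_le (V := R_CompleteNormedModule)) with (fun k => M (S0 + k)%nat).
  - intros k. apply H; lia.
  - apply (ex_series_incr_n M S0); auto.
Qed.

Lemma Series_tail_abs_le (a M : nat -> R) K :
  (forall k, Rabs (a (K + k)%nat) <= M (K + k)%nat) -> ex_series (fun k => M (K + k)%nat) ->
  Rabs (Series (fun k => a (K + k)%nat)) <= Series (fun k => M (K + k)%nat).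
Proof.
  intros H HM.
  assert (HA : ex_series (fun k => Rabs (a (K + k)%nat))).
  { apply (ex_series_le (V := R_CompleteNormedModule)) with (fun k => M (K + k)%nat); auto.
    intros k. unfold norm; simpl; unfold abs; simpl. rewrite Rabs_Rabsolu. auto. }
  eapply Rle_trans; [apply Series_Rabs; auto|].
  apply Series_le; auto. intros k; split; [apply Rabs_pos | auto].
Qed.

Lemma Series_tail_small (M : nat -> R) : ex_series M -> forall eps, 0 < eps ->
  exists K0, forall K, (K0 <= K)%nat -> Rabs (Series (fun k => M (S K + k)%nat)) < eps.
Proof.
  intros HM eps He. destruct HM as [l Hl].
  assert (Hs : Series M = l) by (apply is_series_unique; auto).
  apply is_series_Reals in Hl. destruct (Hl eps He) as [K0 HK0].
  exists K0. intros K HK.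
  rewrite (Series_incr_n M (S K)) in Hs by (lia || (exists l; apply is_series_Reals; auto)).
  simpl pred in Hs. specialize (HK0 K HK). unfold R_dist in HK0.
  replace (Series (fun k => M (S K + k)%nat)) with (l - sum_f_R0 M K) by lra.
  rewrite Rabs_minus_sym. auto.
Qed.

Theorem tannery (T : nat -> nat -> R) (t M : nat -> R) (S0 N0 : nat) :
  (forall s, is_lim_seq (fun n => T s n) (t s)) ->
  (forall s n, (S0 <= s)%nat -> (N0 <= n)%nat -> Rabs (T s n) <= M s) ->
  ex_series M ->
  ex_series t /\ is_lim_seq (fun n => Series (fun s => T s n)) (Series t).
Proof.
  intros Hlim Hdom HM.
  assert (Ht : forall s, (S0 <= s)%nat -> Rabs (t s) <= M s).
  { intros s Hs. change (Rbar_le (Rabs (t s)) (M s)).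
    apply (is_lim_seq_le_loc (fun n => Rabs (T s n)) (fun _ => M s)).
    - exists N0. intros n Hn. apply Hdom; auto.
    - apply (is_lim_seq_abs _ (t s)), Hlim.
    - apply is_lim_seq_const. }
  assert (Hext : ex_series t) by (apply ex_series_eventually_dominated with M S0; auto).
  split; auto.
  apply is_lim_seq_Reals. intros eps Heps.
  destruct (Series_tail_small M HM (eps / 4) ltac:(lra)) as [K0 HK0].
  set (K := max K0 S0).
  assert (HP : is_lim_seq (fun n => sum_f_R0 (fun s => T s n) K) (sum_f_R0 t K)).
  { clear - Hlim. induction K as [|K IH]; simpl; [apply Hlim | apply is_lim_seq_plus'; auto]. }
  apply is_lim_seq_Reals in HP. destruct (HP (eps / 2) ltac:(lra)) as [N1 HN1].
  exists (max N0 N1). intros n Hn. unfold R_dist.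
  assert (HexT : ex_series (fun s => T s n))
    by (apply ex_series_eventually_dominated with M S0; [intros; apply Hdom; lia | auto]).
  rewrite (Series_incr_n (fun s => T s n) (S K)), (Series_incr_n t (S K)) by (lia || auto). simpl pred.
  specialize (HN1 n ltac:(lia)). unfold R_dist in HN1.
  assert (HMt : ex_series (fun k => M (S K + k)%nat)) by (apply (ex_series_incr_n M (S K)); auto).
  assert (H1 := Series_tail_abs_le (fun s => T s n) M (S K) (fun k => Hdom (S K + k)%nat n ltac:(lia) ltac:(lia)) HMt).
  assert (H2 := Series_tail_abs_le t M (S K) (fun k => Ht (S K + k)%nat ltac:(lia)) HMt).
  specialize (HK0 K ltac:(lia)). pose proof (Rle_abs (Series (fun k => M (S K + k)%nat))).
  set (A := sum_f_R0 (fun s => T s n) K) in *. set (B := sum_f_R0 t K) in *.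
  set (X := Series (fun k => T (S K + k)%nat n)) in *. set (Y := Series (fun k => t (S K + k)%nat)) in *.
  replace (A + X - (B + Y)) with ((A - B) + (X - Y)) by ring.
  pose proof (Rabs_triang (A - B) (X - Y)). pose proof (Rabs_triang X (- Y)).
  rewrite Rabs_Ropp in *. unfold Rminus in *. lra.
Qed.

(* [(m)_s / s!], the [s]-th Taylor coefficient of [(1 - w)^(-m)]. *)
Definition binom_coef (m s : nat) := poch (INR m) s / INR (fact s).

Lemma poch_nonneg c n : 0 <= c -> 0 <= poch c n.
Proof. intros Hc. induction n; simpl; [lra|]. pose proof (pos_INR n). nra. Qed.

Lemma binom_coef_bound m s : 0 <= binom_coef m s <= (INR m + 1) ^ s.
Proof.
  unfold binom_coef. pose proof (pos_INR m). induction s as [|s IH]; [simpl; lra|].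
  pose proof (pos_INR s). pose proof (INR_fact_lt_0 s). pose proof (poch_nonneg (INR m) s H).
  replace (poch (INR m) (S s) / INR (fact (S s)))
    with (poch (INR m) s / INR (fact s) * ((INR m + INR s) / (INR s + 1)))
    by (simpl poch; rewrite fact_simpl, mult_INR, S_INR; field; lra).
  assert (Hq : 0 <= (INR m + INR s) / (INR s + 1) <= INR m + 1).
  { split; [apply Rdiv_le_0_compat; lra|].
    apply Rmult_le_reg_r with (INR s + 1); [lra|]. unfold Rdiv. rewrite Rmult_assoc, Rinv_l by lra. nra. }
  simpl pow. rewrite Rmult_comm. split; [apply Rmult_le_pos; lra | apply Rmult_le_compat; lra].
Qed.

Lemma large_nat_power alpha C : 0 < alpha -> 0 < C ->
  exists N : nat, (1 <= N)%nat /\ C / Rpower (INR N) alpha <= 1 / 2.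
Proof.
  intros Ha HC. set (K := Rpower (2 * C) (/ alpha)).
  destruct (nat_upper_bound (Rmax K 1)) as [N HN].
  assert (HN1 : 1 <= INR N) by (eapply Rle_trans; [apply Rmax_r | exact HN]).
  assert (HNK : K <= INR N) by (eapply Rle_trans; [apply Rmax_l | exact HN]).
  exists N. split; [apply INR_le; simpl; lra|].
  assert (HKa : Rpower K alpha = 2 * C).
  { unfold K. rewrite Rpower_mult. replace (/ alpha * alpha) with 1 by (field; lra). apply Rpower_1. lra. }
  assert (2 * C <= Rpower (INR N) alpha) by (rewrite <- HKa; apply Rle_Rpower_l; [lra | split; [apply Rpower_gt0 | auto]]).
  apply Rmult_le_reg_r with (Rpower (INR N) alpha); [apply Rpower_gt0|].
  unfold Rdiv. rewrite Rmult_assoc, Rinv_l by apply Rgt_not_eq, Rpower_gt0. lra.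
Qed.

(* The majorant used throughout: with [a = alpha s] and [1 <= N <= a], the bound
   [1/Gamma a <= N^(1-a) e^(2a)] makes the [s]-th term at most [(N/x) q^s], where
   [q = (m+1) C0 x^alpha e^(2 alpha) / N^alpha] can be made [<= 1/2] by choosing [N] large. *)
Lemma geometric_domination alpha x C0 m : 0 < alpha -> 0 < x -> 0 < C0 ->
  exists N S0 : nat, (1 <= N)%nat /\ forall s, (S0 <= s)%nat ->
    INR N <= alpha * INR s /\
    binom_coef m s * C0 ^ s * Rpower x (alpha * INR s - 1)
      * (Rpower (INR N) (1 - alpha * INR s) * exp (2 * (alpha * INR s)))
    <= INR N / x * (1 / 2) ^ s.
Proof.
  intros Ha Hx HC0.
  set (Rx := Rpower x alpha). set (E := exp (2 * alpha)).
  assert (HRx : 0 < Rx) by apply Rpower_gt0. assert (HE : 0 < E) by apply exp_pos.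
  destruct (large_nat_power alpha ((INR m + 1) * (C0 * Rx * E)) Ha) as [N [HN Hq]].
  { pose proof (pos_INR m). apply Rmult_lt_0_compat; [lra|]. repeat apply Rmult_lt_0_compat; auto. }
  destruct (nat_upper_bound (INR N / alpha)) as [S0 HS0].
  exists N, S0. split; auto. intros s Hs.
  assert (HN0 : 0 < INR N) by (apply lt_0_INR; lia).
  set (RN := Rpower (INR N) alpha). assert (HRN : 0 < RN) by apply Rpower_gt0.
  split.
  { apply Rmult_le_reg_l with (/ alpha); [apply Rinv_0_lt_compat; auto|].
    rewrite <- Rmult_assoc, Rinv_l, Rmult_1_l by lra. rewrite Rmult_comm.
    apply Rle_trans with (INR S0); [exact HS0 | apply le_INR; auto]. }
  assert (E1 : Rpower x (alpha * INR s - 1) = Rx ^ s / x).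
  { apply Rmult_eq_reg_r with x; [| lra]. rewrite Rpower_pred_mult, Rpower_mult_nat by auto. unfold Rx. field. lra. }
  assert (E2 : Rpower (INR N) (1 - alpha * INR s) = INR N / RN ^ s).
  { unfold Rminus. rewrite Rpower_plus, Rpower_Ropp, Rpower_1, Rpower_mult_nat by auto. reflexivity. }
  assert (E3 : exp (2 * (alpha * INR s)) = E ^ s) by (unfold E; rewrite <- exp_mult_nat; f_equal; ring).
  assert (Hterm : binom_coef m s * C0 ^ s * (Rx ^ s / x) * (INR N / RN ^ s * E ^ s)
                  = INR N / x * (binom_coef m s * (C0 * Rx * E / RN) ^ s)).
  { unfold Rdiv. rewrite !Rpow_mult_distr, pow_inv. field. split; [apply pow_nonzero|]; lra. }
  rewrite E1, E2, E3, Hterm.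
  apply Rmult_le_compat_l; [apply Rlt_le, Rdiv_lt_0_compat; lra|].
  pose proof (binom_coef_bound m s) as [Hc1 Hc2].
  assert (Hq0 : 0 <= C0 * Rx * E / RN) by (apply Rlt_le, Rdiv_lt_0_compat; [repeat apply Rmult_lt_0_compat|]; auto).
  apply Rle_trans with ((INR m + 1) ^ s * (C0 * Rx * E / RN) ^ s).
  - apply Rmult_le_compat_r; [apply pow_le|]; lra.
  - rewrite <- Rpow_mult_distr. apply pow_incr. split.
    + pose proof (pos_INR m). apply Rmult_le_pos; lra.
    + replace ((INR m + 1) * (C0 * Rx * E / RN)) with ((INR m + 1) * (C0 * Rx * E) / RN) by (field; lra).
      exact Hq.
Qed.

Section Kernel.

Variables (alpha lambda0 : R) (m : nat) (x : R).
Hypotheses (Halpha : 0 < alpha) (Hlambda0 : 0 < lambda0) (Hx : 0 < x).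

(* The [s]-th term [(m)_s (-lambda0)^s x^(alpha s - 1) / (s! Gamma (alpha s))] of the kernel
   (the [s = 0] term, the Dirac atom, is discarded). *)
Definition kernel_term (s : nat) : R :=
  match s with
  | O => 0
  | S _ => poch (INR m) s * (- lambda0) ^ s * Rpower x (alpha * INR s - 1)
           / (INR (fact s) * Gamma (alpha * INR s))
  end.

(* The [s]-th term of [(1/h) E^(m)_alpha (lambda0 h^alpha, n)] with [h = x/n]: the factor
   [(alpha s)_n / n!] is rewritten through [gauss_seq (alpha s) n]. *)
Definition scaled_term (s n : nat) : R :=
  binom_coef m s * (- lambda0) ^ s * Rpower x (alpha * INR s - 1) * gauss_seq (alpha * INR s) n.

Lemma Ecoef_scaled n : (1 <= n)%nat ->
  / (x / INR n) * Ecoef m alpha (lambda0 * Rpower (x / INR n) alpha) n = Series (fun s => scaled_term s n).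
Proof.
  intros Hn. assert (Hn0 : 0 < INR n) by (apply lt_0_INR; lia).
  unfold Ecoef. rewrite <- !Series_scal_l. apply Series_ext. intros s.
  set (a := alpha * INR s).
  assert (E1 : (- (lambda0 * Rpower (x / INR n) alpha)) ^ s = (- lambda0) ^ s * (Rpower x a / Rpower (INR n) a)).
  { replace (- (lambda0 * Rpower (x / INR n) alpha)) with ((- lambda0) * Rpower (x / INR n) alpha) by ring.
    rewrite Rpow_mult_distr. f_equal. rewrite <- Rpower_mult_nat by (apply Rdiv_lt_0_compat; auto).
    apply Rpower_div; auto. }
  assert (E2 : Rpower x (a - 1) = Rpower x a / x).
  { apply Rmult_eq_reg_r with x; [| lra]. rewrite Rpower_pred_mult by auto. field. lra. }
  assert (E3 : Rpower (INR n) (1 - a) = INR n / Rpower (INR n) a).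
  { unfold Rminus. rewrite Rpower_plus, Rpower_Ropp, Rpower_1 by auto. reflexivity. }
  unfold scaled_term, gauss_seq, binom_coef. fold a. rewrite E1, E2, E3.
  pose proof (Rpower_gt0 x a). pose proof (Rpower_gt0 (INR n) a).
  pose proof (INR_fact_lt_0 n). pose proof (INR_fact_lt_0 s).
  field. repeat split; lra.
Qed.

(* Termwise limit, by Gauss's formula; for [s = 0] one has [(0)_n = 0] when [n >= 1]. *)
Lemma scaled_term_lim s : is_lim_seq (scaled_term s) (kernel_term s).
Proof.
  destruct s as [|s].
  - apply is_lim_seq_ext_loc with (fun _ => 0); [| apply is_lim_seq_const].
    exists 1%nat. intros [|n] Hn; [lia|].
    assert (Hpoch : forall k, poch 0 (S k) = 0)
      by (induction k as [|k IH]; [simpl; ring | change (poch 0 (S k) * (0 + INR (S k)) = 0); rewrite IH; ring]).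
    unfold scaled_term, gauss_seq. simpl INR at 2. rewrite Rmult_0_r, Hpoch. unfold Rdiv. ring.
  - set (a := alpha * INR (S s)).
    assert (Ha : 0 < a) by (unfold a; apply Rmult_lt_0_compat; auto; apply lt_0_INR; lia).
    pose proof (Gamma_pos a Ha). pose proof (INR_fact_lt_0 (S s)).
    replace (kernel_term (S s)) with (binom_coef m (S s) * (- lambda0) ^ S s * Rpower x (a - 1) * / Gamma a)
      by (unfold kernel_term, binom_coef; fold a; field; split; lra).
    apply is_lim_seq_scal_l with (u := gauss_seq a) (lu := Finite (/ Gamma a)).
    apply gauss_seq_lim; auto.
Qed.

Lemma scaled_series_lim :
  ex_series kernel_term /\ is_lim_seq (fun n => Series (fun s => scaled_term s n)) (Series kernel_term).
Proof.
  destruct (geometric_domination alpha x lambda0 m Halpha Hx Hlambda0) as [N [S0 [HN Hdom]]].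
  apply (tannery scaled_term kernel_term (fun s => INR N / x * (1 / 2) ^ s) S0 N scaled_term_lim).
  - intros s n Hs Hn. destruct (Hdom s Hs) as [Has Hbound].
    pose proof (binom_coef_bound m s) as [Hc _].
    pose proof (gauss_seq_nonneg (alpha * INR s) n ltac:(pose proof (lt_0_INR N ltac:(lia)); lra)).
    pose proof (gauss_seq_tail_bound (alpha * INR s) N n HN Has Hn).
    pose proof (Rpower_gt0 x (alpha * INR s - 1)).
    unfold scaled_term. rewrite !Rabs_mult, <- RPow_abs, Rabs_Ropp, !Rabs_pos_eq by lra.
    eapply Rle_trans; [| exact Hbound].
    apply Rmult_le_compat_l; auto. apply Rmult_le_pos; [apply Rmult_le_pos; [auto | apply pow_le]|]; lra.
  - apply (@ex_series_scal_l R_AbsRing R_NormedModule). apply ex_series_geom. rewrite Rabs_pos_eq; lra.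
Qed.

End Kernel.

(* Taylor coefficients of [E^m_{alpha,1}]. *)
Definition prabhakar_coef (alpha : R) (m s : nat) := binom_coef m s / Gamma (alpha * INR s + 1).

Lemma Series_nonneg_ge_term (a : nat -> R) n : ex_series a -> (forall k, 0 <= a k) -> a n <= Series a.
Proof.
  intros He Hp. rewrite (Series_incr_n a (S n)) by (lia || auto). simpl pred.
  assert (0 <= Series (fun k => a (S n + k)%nat)).
  { replace 0 with (Series (fun k => 0 * a (S n + k)%nat)) by (rewrite Series_scal_l; ring).
    apply Series_le; [intros k; rewrite Rmult_0_l; split; [lra | apply Hp]|].
    apply (ex_series_incr_n a (S n)); auto. }
  destruct n as [|n]; [change (sum_f_R0 a 0) with (a 0%nat); lra|].
  rewrite tech5. assert (0 <= sum_f_R0 a n) by (apply cond_pos_sum; auto). lra.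
Qed.

Lemma prabhakar_coef_abs_summable alpha m r : 0 < alpha -> 0 < r ->
  ex_series (fun s => Rabs (prabhakar_coef alpha m s * r ^ s)).
Proof.
  intros Ha Hr.
  destruct (geometric_domination alpha 1 r m Ha Rlt_0_1 Hr) as [N [S0 [HN Hdom]]].
  apply ex_series_eventually_dominated with (fun s => INR N / 1 * (1 / 2) ^ s) S0.
  2:{ apply (@ex_series_scal_l R_AbsRing R_NormedModule). apply ex_series_geom. rewrite Rabs_pos_eq; lra. }
  intros s Hs. destruct (Hdom s Hs) as [Has Hbound].
  assert (HN1 : 1 <= INR N) by (apply (le_INR 1); auto).
  set (a := alpha * INR s) in *.
  pose proof (Gamma_pos a ltac:(lra)). pose proof (Gamma_pos (a + 1) ltac:(lra)).
  pose proof (binom_coef_bound m s) as [Hc _].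
  assert (HG : / Gamma (a + 1) <= Rpower (INR N) (1 - a) * exp (2 * a)).
  { eapply Rle_trans; [| apply (inv_Gamma_bound a N HN Has)].
    rewrite Gamma_succ, Rinv_mult by lra. rewrite <- (Rmult_1_l (/ Gamma a)) at 2.
    apply Rmult_le_compat_r; [apply Rlt_le, Rinv_0_lt_compat; auto|].
    rewrite <- Rinv_1. apply Rinv_le_contravar; lra. }
  unfold prabhakar_coef. fold a. rewrite Rabs_Rabsolu, Rabs_pos_eq.
  2:{ apply Rmult_le_pos; [apply Rdiv_le_0_compat|apply pow_le]; lra. }
  eapply Rle_trans; [| exact Hbound]. rewrite Rpower_1_base, Rmult_1_r.
  unfold Rdiv. rewrite Rmult_assoc, (Rmult_comm (/ _)), <- Rmult_assoc.
  apply Rmult_le_compat_l; auto. apply Rmult_le_pos; [auto | apply pow_le; lra].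
Qed.

Lemma prabhakar_coef_radius alpha m w : 0 < alpha -> Rbar_lt (Rabs w) (CV_radius (prabhakar_coef alpha m)).
Proof.
  intros Ha. set (r := Rabs w + 1). assert (Hr : 0 < r) by (unfold r; pose proof (Rabs_pos w); lra).
  destruct (CV_radius_bounded (prabhakar_coef alpha m)) as [Hub _].
  assert (HE : Rbar_le r (CV_radius (prabhakar_coef alpha m))).
  { apply Hub. exists (Series (fun s => Rabs (prabhakar_coef alpha m s * r ^ s))). intros n.
    apply (Series_nonneg_ge_term (fun s => Rabs (prabhakar_coef alpha m s * r ^ s))).
    - apply prabhakar_coef_abs_summable; auto.
    - intros; apply Rabs_pos. }
  eapply Rbar_lt_le_trans; [| exact HE]. simpl. unfold r; lra.
Qed.

(* Termwise differentiation: [d/dx E^m_{alpha,1}(-lambda0 x^alpha) = sum_s kernel_term s],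
   using [Gamma (alpha s + 1) = alpha s Gamma (alpha s)]. *)
Lemma prabhakar_derive alpha lambda0 m x : 0 < alpha -> 0 < x -> ex_series (kernel_term alpha lambda0 m x) ->
  is_derive (fun y => prabhakar (INR m) alpha 1 (- lambda0 * Rpower y alpha)) x
    (Series (kernel_term alpha lambda0 m x)).
Proof.
  intros Ha Hx Hex.
  set (w := - lambda0 * Rpower x alpha).
  set (dg := - lambda0 * (alpha * Rpower x (alpha - 1))).
  assert (Hg : is_derive (fun y => - lambda0 * Rpower y alpha) x dg)
    by (apply (is_derive_scal (fun y => Rpower y alpha)), is_derive_Rpower; auto).
  assert (HP := is_derive_PSeries (prabhakar_coef alpha m) w (prabhakar_coef_radius alpha m w Ha)).
  assert (HC := is_derive_comp (PSeries (prabhakar_coef alpha m)) (fun y => - lambda0 * Rpower y alpha) x _ _ HP Hg).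
  replace (Series (kernel_term alpha lambda0 m x)) with (scal dg (PSeries (PS_derive (prabhakar_coef alpha m)) w)).
  { apply (is_derive_ext (fun y => PSeries (prabhakar_coef alpha m) (- lambda0 * Rpower y alpha))); [| exact HC].
    intros y. unfold prabhakar, PSeries. apply Series_ext. intros s.
    unfold prabhakar_coef, binom_coef, Rdiv. ring. }
  unfold scal; simpl; unfold mult; simpl. unfold PSeries.
  rewrite <- Series_scal_l, (Series_incr_1 _ Hex). simpl (kernel_term _ _ _ _ 0). rewrite Rplus_0_l.
  apply Series_ext. intros k. unfold PS_derive, prabhakar_coef, kernel_term, binom_coef, w, dg.
  set (a := alpha * INR (S k)).
  assert (Hap : 0 < a) by (unfold a; apply Rmult_lt_0_compat; auto; apply lt_0_INR; lia).
  rewrite Gamma_succ by auto. pose proof (Gamma_pos a Hap). pose proof (INR_fact_lt_0 (S k)).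
  assert (E : Rpower x (a - 1) = Rpower x (alpha - 1) * Rpower x alpha ^ k).
  { rewrite <- Rpower_mult_nat, <- Rpower_plus by auto. f_equal. unfold a. rewrite S_INR. ring. }
  rewrite E, Rpow_mult_distr. unfold a in *. rewrite S_INR in *. simpl pow.
  pose proof (pos_INR k). field. repeat split; lra.
Qed.

Theorem mainTheorem12 (alpha lambda0 : R) (m : nat) (x : R) :
  0 < alpha <= 1 -> 0 < lambda0 -> 0 < x ->
  exists L : R,
    is_series (fun s => match s with
                        | O => 0
                        | S _ => poch (INR m) s * (- lambda0) ^ s
                                 * Rpower x (alpha * INR s - 1)
                                 / (INR (Factorial.fact s) * Gamma (alpha * INR s))
                        end) L /\
    is_lim_seq (fun n => / (x / INR n) *
                  Ecoef m alpha (lambda0 * Rpower (x / INR n) alpha) n) L /\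
    is_derive (fun y => prabhakar (INR m) alpha 1 (- lambda0 * Rpower y alpha)) x L.
Proof.
  intros [Ha _] Hl Hx.
  destruct (scaled_series_lim alpha lambda0 m x Ha Hl Hx) as [Hex Hlim].
  exists (Series (kernel_term alpha lambda0 m x)). split; [| split].
  - exact (Series_correct _ Hex).
  - eapply is_lim_seq_ext_loc; [| exact Hlim].
    exists 1%nat. intros n Hn. symmetry. apply Ecoef_scaled; auto.
  - apply prabhakar_derive; auto.
Qed.
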